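(* Let $X$ and $Y$ be pre-ordered Banach spaces with closed cones, and suppose $Y$ is $\alpha$-normal for some $\alpha>0$. If the operator norm on $B(X,Y)$ is positively attained, then $B(X,Y)$ is $\alpha$-normal.
   Context: A pre-ordered Banach space is a real Banach space $X$ with a cone $X_+$ (a subset with $X_++X_+\subseteq X_+$, $\lambda X_+\subseteq X_+$ for $\lambda\ge0$); $x\ge y$ means $x-y\in X_+$. $B(X,Y)$ is the space of bounded linear operators with the operator norm, pre-ordered by the cone $B(X,Y)_+=\{T: TX_+\subseteq Y_+\}$. A pre-ordered Banach space $Z$ is $\alpha$-normal if $0\le x\le y$ implies $\|x\|\le\alpha\|y\|$. For $T\in B(X,Y)$ put $\|T\|_+=\sup\{\|Tx\|: x\in X_+,\ \|x\|=1\}$; the operator norm on $B(X,Y)$ is positively attained if $\|T\|=\|T\|_+$ for all $T\in B(X,Y)_+$. *)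

From mathcomp Require Import all_boot all_order all_algebra.
From mathcomp Require Import all_classical all_reals all_analysis.
Set Implicit Arguments. Unset Strict Implicit. Unset Printing Implicit Defensive.
Import Order.TTheory GRing.Theory Num.Theory.
Import numFieldNormedType.Exports.
Local Open Scope classical_set_scope.
Local Open Scope ring_scope.

Definition is_cone {R : realType} {V : lmodType R} (K : set V) : Prop :=
  (forall x y, K x -> K y -> K (x + y)) /\
  (forall (l : R) x, 0 <= l -> K x -> K (l *: x)).

Definition bounded_linear {R : realType} (X Y : normedModType R) (T : X -> Y) : Prop :=
  linear T /\ exists M : R, forall x, `|T x| <= M * `|x|.

Definition opnorm {R : realType} (X Y : normedModType R) (T : X -> Y) : R :=
  sup [set `|T x| | x in [set x : X | `|x| <= 1]].

Definition posnorm {R : realType} (X Y : normedModType R) (KX : set X) (T : X -> Y) : R :=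
  sup [set `|T x| | x in [set x : X | KX x /\ `|x| = 1]].

Definition positive_op {R : realType} (X Y : normedModType R) (KX : set X) (KY : set Y)
  (T : X -> Y) : Prop := forall x, KX x -> KY (T x).

Definition alpha_normal {R : realType} (Z : normedModType R) (K : set Z) (alpha : R) : Prop :=
  forall x y : Z, K x -> K (y - x) -> `|x| <= alpha * `|y|.

From mathcomp Require Import all_boot all_order all_algebra.
From mathcomp Require Import all_classical all_reals all_analysis.
Import Order.TTheory GRing.Theory Num.Theory.
Import numFieldNormedType.Exports.
Local Open Scope classical_set_scope.
Local Open Scope ring_scope.

(* Since the norm of a positive operator is attained on the cone, it suffices to
   bound [||S x||] for positive unit vectors [x]; there [0 <= S x <= T x], so
   normality of [Y] gives [||S x|| <= alpha ||T x|| <= alpha ||T||]. *)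

Section OperatorNorms.
Variables (R : realType) (X Y : normedModType R).

Lemma opnorm_ub (T : X -> Y) (x : X) :
  bounded_linear T -> `|x| <= 1 -> `|T x| <= opnorm T.
Proof.
move=> [_ [M HM]] hx; apply: ub_le_sup; last by exists x.
exists `|M| => _ [y hy <-].
apply: le_trans (HM y) _; apply: (le_trans (y := `|M| * `|y|)).
  by apply: ler_wpM2r => //; apply: ler_norm.
by rewrite -[leRHS]mulr1; apply: ler_wpM2l.
Qed.

Lemma opnorm_ge0 (T : X -> Y) : bounded_linear T -> 0 <= opnorm T.
Proof.
by move=> bT; apply: le_trans (@opnorm_ub T 0 bT _); rewrite ?normr0.
Qed.

(* [0 <= M] is needed because [sup set0 = 0] when [X_+] has no unit vector. *)
Lemma posnorm_le (KX : set X) (T : X -> Y) (M : R) :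
  0 <= M -> (forall x, KX x -> `|x| = 1 -> `|T x| <= M) -> posnorm KX T <= M.
Proof.
move=> M0 hM; rewrite /posnorm.
have [->|ne] := eqVneq [set `|T x| | x in [set x : X | KX x /\ `|x| = 1]] set0.
  by rewrite sup0.
apply: ge_sup; first by apply/set0P.
by move=> _ [x [Kx nx] <-]; apply: hM.
Qed.

End OperatorNorms.

Theorem proposition4p5 (R : realType) (X Y : completeNormedModType R)
  (KX : set X) (KY : set Y) (alpha : R) :
  is_cone KX -> closed KX -> is_cone KY -> closed KY ->
  0 < alpha -> alpha_normal KY alpha ->
  (forall T : X -> Y, bounded_linear T -> positive_op KX KY T ->
     opnorm T = posnorm KX T) ->
  forall S T : X -> Y, bounded_linear S -> bounded_linear T ->
    positive_op KX KY S -> positive_op KX KY (fun x => T x - S x) ->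
    opnorm S <= alpha * opnorm T.
Proof.
move=> _ _ _ _ alpha_gt0 normalY attained S T bS bT posS posTS.
rewrite (attained S bS posS).
apply: posnorm_le => [|x Kx x1].
  by apply: mulr_ge0; [exact: ltW | exact: opnorm_ge0].
apply: le_trans (normalY _ _ (posS x Kx) (posTS x Kx)) _.
have normTx : `|T x| <= opnorm T by apply: opnorm_ub bT _; rewrite x1.
by apply: ler_wpM2l => //; apply: ltW.
Qed.
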